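(* Let $k$ be a field and $\mathsf{E}$ a locally finite $k$-linear category. Then the contravariant functor $\mathcal{N}\mapsto\mathcal{N}^*=\operatorname{Hom}_k(\mathcal{N},k)$ from the category of locally finite right $\mathcal{C}_\mathsf{E}$-comodules to the category of locally finite left $\mathcal{C}_\mathsf{E}$-contramodules is fully faithful; i.e., for locally finite right $\mathcal{C}_\mathsf{E}$-comodules $\mathcal{M},\mathcal{N}$, the map $f\mapsto f^*$ is a bijection from comodule morphisms $\mathcal{M}\to\mathcal{N}$ to contramodule morphisms $\mathcal{N}^*\to\mathcal{M}^*$.
   Context: A small $k$-linear category $\mathsf{E}$ has finite-or-not $k$-vector spaces $\operatorname{Hom}_\mathsf{E}(x,y)$, $k$-bilinear associative composition and identities with $\mathrm{id}_x\ne0$. Write $x\preceq y$ if there are $n\ge1$ and objects $x=z_0,\dots,z_n=y$ with $\operatorname{Hom}_\mathsf{E}(z_{i-1},z_i)\neq0$ for all $i$. $\mathsf{E}$ is locally finite if all $\operatorname{Hom}_\mathsf{E}(x,y)$ are finite-dimensional and every $\{z:x\preceq z\preceq y\}$ is finite. $\mathcal{C}_\mathsf{E}=\bigoplus_{x,y}\mathcal{C}^{x,y}$, $\mathcal{C}^{x,y}=\operatorname{Hom}_\mathsf{E}(x,y)^*$; counit zero on $\mathcal{C}^{x,y}$ for $x\ne y$, evaluation at $\mathrm{id}_x$ on $\mathcal{C}^{x,x}$; comultiplication $\mathcal{C}^{x,y}\to\bigoplus_z\mathcal{C}^{x,z}\otimes\mathcal{C}^{z,y}$ dual to composition $g\otimes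 h\mapsto hg$. Let $e_x\in\mathcal{C}_\mathsf{E}^*$ be evaluation at $\mathrm{id}_x$ on $\mathcal{C}^{x,x}$ and zero elsewhere. A right comodule is $(\mathcal{N},\nu:\mathcal{N}\to\mathcal{N}\otimes_k\mathcal{C}_\mathsf{E})$ coassociative and counital; for $\varphi\in\mathcal{C}_\mathsf{E}^*$ put $\varphi\cdot n=(\mathrm{id}\otimes\varphi)\nu(n)$. One has $\mathcal{N}=\bigoplus_xe_x\cdot\mathcal{N}$; $\mathcal{N}$ is locally finite if each $e_x\cdot\mathcal{N}$ is finite-dimensional. A left contramodule over a coalgebra $(\mathcal{C},\mu,\epsilon)$ is a space $\mathfrak{P}$ with $\pi:\operatorname{Hom}_k(\mathcal{C},\mathfrak{P})\to\mathfrak{P}$ such that $\pi(c\mapsto\epsilon(c)p)=p$ and, under $\operatorname{Hom}_k(\mathcal{C},\operatorname{Hom}_k(\mathcal{C},\mathfrak{P}))\cong\operatorname{Hom}_k(\mathcal{C}\otimes\mathcal{C},\mathfrak{P})$, $f\mapsto(c'\otimes c''\mapsto f(c'')(c'))$, $\pi(c\mapsto\pi(f(c)))=\pi(f\circ\mu)$; morphisms commute with $\pi$. For $\varphi\in\mathcal{C}^*$ set $\varphi\cdot p=\pi(c\mapsto\varphi(c)p)$. For a left $\mathcal{C}_\mathsf{E}$-contramodule, $\mathfrak{P}\cong\prod_xe_x\cdot\mathfrak{P}$, and $\mathfrak{P}$ is locally finite if each $e_x\cdot\mathfrak{P}$ is finite-dimensional. For a right comodule $\mathcal{N}$, $\mathcal{N}^*$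 is a left contramodule with $\pi(g)(n)=\sum_ig(c_i)(n_i)$ where $\nu(n)=\sum_in_i\otimes c_i$. *)

From HB Require Import structures.
From mathcomp Require Import all_boot all_order all_algebra.
Unset Printing Implicit Defensive.
Import GRing.Theory.
Local Open Scope ring_scope.

(* A (small) k-linear category with finite-dimensional Hom spaces.
   [comp g h] is the composite "h o g" of g : x -> y and h : y -> z. *)
Record kcat (k : fieldType) := KCat {
  Obj : eqType;
  Hom : Obj -> Obj -> vectType k;
  comp : forall x y z, Hom x y -> Hom y z -> Hom x z;
  idm : forall x, Hom x x;
  comp_linl : forall x y z (a : k) (g1 g2 : Hom x y) (h : Hom y z),
      comp x y z (a *: g1 + g2) h = a *: comp x y z g1 h + comp x y z g2 h;
  comp_linr : forall x y z (a : k) (g : Hom x y) (h1 h2 : Hom y z),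
      comp x y z g (a *: h1 + h2) = a *: comp x y z g h1 + comp x y z g h2;
  comp_assoc : forall x y z w (f : Hom x y) (g : Hom y z) (h : Hom z w),
      comp x z w (comp x y z f g) h = comp x y w f (comp y z w g h);
  comp_idl : forall x y (g : Hom x y), comp x x y (idm x) g = g;
  comp_idr : forall x y (g : Hom x y), comp x y y g (idm y) = g;
  idm_neq0 : forall x, idm x != 0
}.
Arguments comp {k} _ {x y z} _ _.
Arguments idm {k} _ x.
Arguments Hom {k} _ _ _.
Arguments Obj {k} _.

Section Defs.
Variables (k : fieldType) (E : kcat k).

Definition nzhom (x y : Obj E) : Prop := exists g : Hom E x y, g != 0.

Inductive prec : Obj E -> Obj E -> Prop :=
| prec_one x y : nzhom x y -> prec x y
| prec_cons x y z : prec x y -> nzhom y z -> prec x z.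

(* local finiteness (Hom spaces are finite-dimensional by construction) *)
Definition locally_finite : Prop :=
  forall x y, exists s : seq (Obj E), forall z, prec x z -> prec z y -> z \in s.

(* The component C^{x,y} = Hom_E(x,y)^* of the coalgebra C_E. *)
Definition Ccomp (x y : Obj E) := 'Hom(Hom E x y, k^o).

(* The coaction nu : N -> N (x) C_E is encoded through
   the canonical isomorphism  N (x) C_E = (+)_{x,y} N (x) Hom(x,y)^*
   = (+)_{x,y} Hom_k(Hom(x,y), N)  (Hom(x,y) finite-dimensional):
   [coact n x y] is the (x,y)-component of nu(n), i.e. the linear map
   g |-> (id (x) ev_g) nu(n). *)
Record comodule := Comodule {
  ccarrier : lmodType k;
  coact : ccarrier -> forall x y : Obj E, Hom E x y -> ccarrier;
  coact_linl : forall (a : k) (n m : ccarrier) x y g,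
      coact (a *: n + m) x y g = a *: coact n x y g + coact m x y g;
  coact_linr : forall (n : ccarrier) x y (a : k) (g h : Hom E x y),
      coact n x y (a *: g + h) = a *: coact n x y g + coact n x y h;
  (* nu(n) lies in the direct sum: finitely many nonzero components *)
  coact_fin : forall n : ccarrier, exists s : seq (Obj E),
      forall x y g, (x \notin s) || (y \notin s) -> coact n x y g = 0;
  coact_assoc : forall (n : ccarrier) x z y (g : Hom E x z) (h : Hom E z y),
      coact (coact n z y h) x z g = coact n x y (comp E g h);
  coact_counit : forall (n : ccarrier) (s : seq (Obj E)), uniq s ->
      (forall x y g, (x \notin s) || (y \notin s) -> coact n x y g = 0) ->
      n = \sum_(x <- s) coact n x x (idm E x)
}.
Coercion ccarrier : comodule >-> lmodType.

Definition supp_in (N : comodule) (n : N) (s : seq (Obj E)) : Prop :=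
  forall x y g, (x \notin s) || (y \notin s) -> coact N n x y g = 0.

Definition eact (N : comodule) (x : Obj E) (n : N) : N := coact N n x x (idm E x).

Definition lf_comod (N : comodule) : Prop :=
  forall x, exists s : seq N, forall n : N,
    exists a : 'I_(size s) -> k, eact N x n = \sum_(i < size s) a i *: s`_i.

Definition comod_morph (M N : comodule) (f : {linear M -> N}) : Prop :=
  forall (m : M) x y g, coact N (f m) x y g = f (coact M m x y g).

Definition dualb (x y : Obj E) (j : 'I_(\dim {:Hom E x y})) : Ccomp x y :=
  linfun (fun v : Hom E x y => (coord (vbasis {:Hom E x y}) j v : k^o)).

(* For h : C^{x,y} -> N^* and T : Hom(x,y) -> N representing
   t = sum_i n_i (x) c_i in N (x) C^{x,y}, [contr h T] = sum_i h(c_i)(n_i).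
   (T corresponds to sum_j T(b_j) (x) b_j^* for any basis b.) *)
Definition contr (N : lmodType k) (x y : Obj E) (h : Ccomp x y -> N -> k)
    (T : Hom E x y -> N) : k :=
  \sum_(j < \dim {:Hom E x y}) h (dualb x y j) (T (vbasis {:Hom E x y})`_j).

(* [is_pi N g phi]: phi = pi_{N^*}(g) where g in Hom_k(C_E, N^* ) is given by
   its components g x y : C^{x,y} -> N^*  (Hom_k((+) C^{x,y}, P) = prod Hom_k(C^{x,y},P)),
   and pi(g)(n) = sum_i g(c_i)(n_i) for nu(n) = sum_i n_i (x) c_i. *)
Definition is_pi (N : comodule) (g : forall x y, Ccomp x y -> {scalar N})
    (phi : {scalar N}) : Prop :=
  forall (n : N) (s : seq (Obj E)), uniq s -> supp_in N n s ->
    phi n = \sum_(x <- s) \sum_(y <- s) contr N x y (fun c => g x y c : N -> k) (coact N n x y).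

Definition lin_family (N : comodule) (g : forall x y, Ccomp x y -> {scalar N}) :=
  forall x y (a : k) (c c' : Ccomp x y) (n : N),
    g x y (a *: c + c') n = a * g x y c n + g x y c' n.

Definition contra_morph (N M : comodule) (F : {scalar N} -> {scalar M}) : Prop :=
  (forall (a : k) (phi psi chi : {scalar N}),
      (forall n, chi n = a * phi n + psi n) ->
      forall m, F chi m = a * F phi m + F psi m) /\
  (forall g : forall x y, Ccomp x y -> {scalar N}, lin_family N g ->
      forall phi, is_pi N g phi -> is_pi M (fun x y c => F (g x y c)) (F phi)).

Definition dual_map (M N : comodule) (f : {linear M -> N}) :
  {scalar N} -> {scalar M} := fun phi => phi \o f.

End Defs.

Arguments comodule {k} E.
Arguments coact {k E c} n x y g : rename.
Arguments comod_morph {k E M N} f.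
Arguments contra_morph {k E N M} F.
Arguments dual_map {k E M N} f.
Arguments lf_comod {k E} N.
Arguments locally_finite {k} E.

From Pilot Require Import Defs.
From HB Require Import structures.
From mathcomp Require Import all_boot all_order all_algebra.
From Stdlib Require Import Classical IndefiniteDescription.
(* vector.v also defines [Hom]; re-import [Defs] so that [Hom] is E's. *)
Import Defs.
Import GRing.Theory.
Local Open Scope ring_scope.

(* A vector n of a locally finite comodule N is the finite sum of its
   components e_x.n, each lying in a finite-dimensional space; hence linear
   functionals separate the points of N and f is determined by f^*.  Conversely, a
   contramodule morphism F : N^* -> M^* commutes with precomposition by every
   coaction component n |-> nu(n)_{x,y}(g): apply the contraaction to the
   family c |-> c(g) phi concentrated at (x,y).  As e_y.N is
   finite-dimensional, phi |-> F(phi o e_y)(m) is evaluation at some vector of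
   N; summing these vectors over the support of m gives f(m) with
   phi(f m) = F phi m, and separation of points makes f linear and a comodule
   morphism. *)

Definition scalar_of (K : pzRingType) (U : lmodType K) (f : U -> K)
    (hf : scalar f) : {scalar U} :=
  HB.pack f (GRing.isLinear.Build K U K *%R f hf).

Definition linear_of (K : pzRingType) (U V : lmodType K) (f : U -> V)
    (hf : linear f) : {linear U -> V} :=
  HB.pack f (GRing.isLinear.Build K U V *:%R f hf).

Arguments scalar_of {K U f}.
Arguments linear_of {K U V f}.

Section FiniteSpan.
Variables (K : fieldType) (V : lmodType K).

Definition lspan (s : seq V) (v : V) : Prop :=
  exists a : nat -> K, v = \sum_(i < size s) a i *: s`_i.

Definition lfree (s : seq V) : Prop :=
  forall a : nat -> K, \sum_(i < size s) a i *: s`_i = 0 ->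
    forall i, (i < size s)%N -> a i = 0.

Lemma lspan0 s : lspan s 0.
Proof. by exists (fun _ => 0); rewrite big1 // => i _; rewrite scale0r. Qed.

Lemma lspan_comb s c u v : lspan s u -> lspan s v -> lspan s (c *: u + v).
Proof.
move=> [a ->] [b ->]; exists (fun i => c * a i + b i).
rewrite scaler_sumr -big_split /=; apply: eq_bigr => i _.
by rewrite scalerDl scalerA.
Qed.

Lemma lspan_cons x s v : lspan s v -> lspan (x :: s) v.
Proof.
move=> [a ->]; exists (fun i => if i is j.+1 then a j else 0).
by rewrite /= big_ord_recl /= scale0r add0r.
Qed.

Lemma lspan_head x s : lspan (x :: s) x.
Proof.
exists (fun i => if i is 0%N then 1 else 0).
by rewrite /= big_ord_recl /= scale1r big1 ?addr0 // => i _; rewrite scale0r.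
Qed.

Lemma lspan_consE x s v :
  lspan (x :: s) v -> exists c w, v = c *: x + w /\ lspan s w.
Proof.
move=> [a ->]; exists (a 0%N), (\sum_(i < size s) a i.+1 *: s`_i).
by split; [rewrite /= big_ord_recl | exists (fun i => a i.+1)].
Qed.

Lemma lfree_cons x s : lfree s -> ~ lspan s x -> lfree (x :: s).
Proof.
move=> free_s xNs a; rewrite /= big_ord_recl /= => sum0.
have a0 : a 0%N = 0.
  have [//|a0_neq0] := eqVneq (a 0%N) 0; case: xNs.
  exists (fun i => - (a 0%N)^-1 * a i.+1); apply: (scalerI a0_neq0).
  have -> : a 0%N *: x = - \sum_(i < size s) a i.+1 *: s`_i.
    by apply/eqP; rewrite -addr_eq0 sum0.
  rewrite scaler_sumr -sumrN; apply: eq_bigr => i _.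
  by rewrite !scalerA mulrA mulrN mulfV // mulN1r scaleNr.
move: sum0; rewrite a0 scale0r add0r => sum0 [|i] //= lt_i_s.
exact: (free_s (fun i => a i.+1)).
Qed.

Lemma lfree_subspan s : exists b, lfree b /\ forall v, lspan s v -> lspan b v.
Proof.
elim: s => [|x s [b [free_b sub_b]]].
  exists [::]; split=> [a _ i //|v [a ->]].
  by rewrite big_ord0; apply: lspan0.
have [xb | xNb] := classic (lspan b x).
  exists b; split=> // v /lspan_consE[c [w [-> /sub_b]]]; exact: lspan_comb.
exists (x :: b); split; first exact: lfree_cons.
move=> v /lspan_consE[c [w [-> /sub_b wb]]].
by apply: lspan_comb; [apply: lspan_head | apply: lspan_cons].
Qed.

Lemma lfree_coord_eq b (a a' : nat -> K) :
  lfree b -> \sum_(i < size b) a i *: b`_i = \sum_(i < size b) a' i *: b`_i ->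
  forall i, (i < size b)%N -> a i = a' i.
Proof.
move=> free_b eq_sum i lt_i_b; apply/eqP; rewrite -subr_eq0; apply/eqP.
apply: (free_b (fun i => a i - a' i)) => //.
by under eq_bigr do rewrite scalerBl; rewrite sumrB eq_sum subrr.
Qed.

(* The coordinate functionals are linear because coordinates along a free
   family are unique. *)
Lemma finite_rank_coords (U : lmodType K) (P : U -> V) (s : seq V) :
  linear P -> (forall u, lspan s (P u)) ->
  exists b : seq V, exists c : nat -> {scalar U},
    forall u, P u = \sum_(i < size b) c i u *: b`_i.
Proof.
move=> P_lin Ps; have [b [free_b sub_b]] := lfree_subspan s.
have [A PA] := functional_choice _ (fun u => sub_b _ (Ps u)).
pose c i u := if (i < size b)%N then A u i else 0.
have c_lin i : scalar (c i).
  move=> x u v; rewrite /c; case: ifP => [lt_i_b|]; last by rewrite mulr0 addr0.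
  apply: (@lfree_coord_eq b _ (fun j => x * A u j + A v j)) => //.
  rewrite -PA P_lin !PA scaler_sumr -big_split /=.
  by apply: eq_bigr => j _; rewrite scalerDl scalerA.
exists b, (fun i => scalar_of (c_lin i)) => u.
by rewrite PA; apply: eq_bigr => i _; rewrite /= /c ltn_ord.
Qed.

End FiniteSpan.

Section Comodules.
Variables (k : fieldType) (E : kcat k).

Lemma comodule_supp {N : comodule E} (n : N) :
  exists s, uniq s /\ supp_in k E N n s.
Proof.
have [s s_supp] := coact_fin _ _ N n; exists (undup s).
by split=> [|x y g]; rewrite ?undup_uniq ?mem_undup; last exact: s_supp.
Qed.

Lemma coact0r (N : comodule E) (n : N) x y : coact n x y 0 = 0.
Proof.
have := coact_linr _ _ N n x y 1 0 0; rewrite !scale1r addr0 => dbl.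
by apply: (addrI (coact n x y 0)); rewrite addr0 -dbl.
Qed.

Lemma eact_linear (N : comodule E) x : linear (eact k E N x).
Proof. by move=> a u v; apply: coact_linl. Qed.

Lemma eact_coords {N : comodule E} : lf_comod N -> forall x,
  exists b : seq N, exists c : nat -> {scalar N},
    forall n, eact k E N x n = \sum_(i < size b) c i n *: b`_i.
Proof.
move=> lfN x; have [s s_span] := lfN x.
apply: (@finite_rank_coords _ _ _ _ s); first exact: eact_linear.
move=> n; have [a ->] := s_span n.
exists (fun j => if insub j is Some i then a i else 0).
by apply: eq_bigr => i _; rewrite valK.
Qed.

Lemma scalars_separate {N : comodule E} : lf_comod N ->
  forall v : N, (forall phi : {scalar N}, phi v = 0) -> v = 0.
Proof.
move=> lfN v v0; have [s [uniq_s supp_v]] := comodule_supp v.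
rewrite (coact_counit _ _ N v s uniq_s supp_v) big1_seq // => x _.
have [b [c eact_c]] := eact_coords lfN x.
by rewrite -/(eact k E N x v) eact_c big1 // => i _; rewrite v0 scale0r.
Qed.

Lemma dual_map_inj (M N : comodule E) (f g : {linear M -> N}) : lf_comod N ->
  (forall (phi : {scalar N}) (m : M), dual_map f phi m = dual_map g phi m) ->
  forall m, f m = g m.
Proof.
move=> lfN fg m; apply/eqP; rewrite -subr_eq0; apply/eqP.
apply: scalars_separate => // phi.
by have := fg phi m; rewrite raddfB => /= ->; rewrite subrr.
Qed.

Lemma dual_map_contra_morph (M N : comodule E) (f : {linear M -> N}) :
  comod_morph f -> contra_morph (dual_map f).
Proof.
move=> f_morph; split=> [a phi psi chi chiE m | g _ phi phi_pi m s uniq_s supp_m].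
  by rewrite /dual_map /= chiE.
have supp_fm : supp_in k E N (f m) s.
  by move=> x y h out_xy; rewrite f_morph supp_m // raddf0.
rewrite /dual_map /= (phi_pi (f m) s uniq_s supp_fm).
by do 3![apply: eq_bigr => ? _]; rewrite f_morph.
Qed.

(* [hom_at u x y] is u when (x, y) = (x0, y0) and 0 otherwise; it builds
   families C_E -> N^* supported on the single component C^{x0,y0}. *)
Definition hom_at {x0 y0 : Obj E} (u : Hom E x0 y0) (x y : Obj E) : Hom E x y :=
  match x0 =P x, y0 =P y with
  | ReflectT ex, ReflectT ey =>
      eq_rect y0 (Hom E x) (eq_rect x0 (fun a => Hom E a y0) u x ex) y ey
  | _, _ => 0
  end.

Lemma hom_at_id x0 y0 (u : Hom E x0 y0) : hom_at u x0 y0 = u.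
Proof.
rewrite /hom_at; case: eqP => // ex; case: eqP => // ey.
by rewrite (eq_axiomK ex) (eq_axiomK ey).
Qed.

Lemma hom_at_out x0 y0 (u : Hom E x0 y0) x y :
  (x != x0) || (y != y0) -> hom_at u x y = 0.
Proof.
by rewrite /hom_at; case: eqP => // ex; case: eqP => // ey; subst; rewrite !eqxx.
Qed.

Lemma sum_hom_at (V : zmodType) (Phi : forall x y, Hom E x y -> V) x0 y0
    (u : Hom E x0 y0) (s : seq (Obj E)) :
  (forall x y, Phi x y 0 = 0) -> uniq s ->
  \sum_(x <- s) \sum_(y <- s) Phi x y (hom_at u x y)
    = if (x0 \in s) && (y0 \in s) then Phi x0 y0 u else 0.
Proof.
move=> Phi0 uniq_s.
have out x y : (x != x0) || (y != y0) -> Phi x y (hom_at u x y) = 0.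
  by move=> out_xy; rewrite hom_at_out.
case: ifP => [/andP[x0s y0s] | x0y0Ns].
  rewrite (bigD1_seq x0) //= (bigD1_seq y0) //= hom_at_id.
  rewrite big1 ?addr0 => [|y y_neq]; last by rewrite out // y_neq orbT.
  rewrite big1 ?addr0 // => x x_neq.
  by rewrite big1 // => y _; rewrite out // x_neq.
rewrite big1_seq // => x /andP[_ xs]; rewrite big1_seq // => y /andP[_ ys].
apply: out; apply: contraFT x0y0Ns; rewrite negb_or !negbK => /andP[/eqP<- /eqP<-].
by rewrite xs ys.
Qed.

Lemma contrE (P : lmodType k) x y (u : Hom E x y) (psi : {scalar P})
    (h : Ccomp k E x y -> P -> k) (T : Hom E x y -> P) :
  (forall c p, h c p = c u * psi p) -> linear T ->
  contr k E P x y h T = psi (T u).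
Proof.
move=> hE T_lin; rewrite /contr.
under eq_bigr do rewrite hE /dualb lfunE /=.
have -> : T u = linear_of T_lin u by [].
rewrite {2}(coord_vbasis (memvf u)) linear_sum raddf_sum.
by apply: eq_bigr => j _; rewrite linearZ /= linearZ.
Qed.
Arguments contrE {P x y u psi h T}.

Lemma sum_contr_hom_at (P : comodule E) (n : P) s x0 y0 (u : Hom E x0 y0)
    (psi : {scalar P}) (h : forall x y, Ccomp k E x y -> P -> k) :
  uniq s -> supp_in k E P n s ->
  (forall x y c p, h x y c p = c (hom_at u x y) * psi p) ->
  \sum_(x <- s) \sum_(y <- s) contr k E P x y (h x y) (coact n x y)
    = psi (coact n x0 y0 u).
Proof.
move=> uniq_s supp_n hE.
transitivity (\sum_(x <- s) \sum_(y <- s) psi (coact n x y (hom_at u x y))).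
  by do 2![apply: eq_bigr => ? _]; apply: contrE => // a g g'; apply: coact_linr.
rewrite (@sum_hom_at _ (fun x y g => psi (coact n x y g))) // => [|x y].
  by case: ifP => // x0y0Ns; rewrite supp_n ?raddf0 // -negb_and x0y0Ns.
by rewrite coact0r raddf0.
Qed.

Section ContraMorphisms.
Variables (M N : comodule E) (F : {scalar N} -> {scalar M}).
Hypothesis F_morph : contra_morph F.

Lemma contra_morph_comb a (phi psi chi : {scalar N}) :
  (forall n, chi n = a * phi n + psi n) ->
  forall m, F chi m = a * F phi m + F psi m.
Proof. by case: F_morph => comb _; apply: comb. Qed.

Lemma contra_morph_scale a (phi chi : {scalar N}) :
  (forall n, chi n = a * phi n) -> forall m, F chi m = a * F phi m.
Proof.
move=> chiE m; rewrite (@contra_morph_comb (a - 1) phi phi) => [|n].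
  by rewrite mulrBl mul1r subrK.
by rewrite chiE mulrBl mul1r subrK.
Qed.

Lemma contra_morph_sum n (a : nat -> k) (ps : nat -> {scalar N})
    (chi : {scalar N}) :
  (forall v, chi v = \sum_(i < n) a i * ps i v) ->
  forall m, F chi m = \sum_(i < n) a i * F (ps i) m.
Proof.
elim: n chi => [|n IHn] chi chiE m.
  rewrite big_ord0 (@contra_morph_scale 0 chi) ?mul0r // => v.
  by rewrite chiE big_ord0 mul0r.
have part_lin : scalar (fun v => \sum_(i < n) a i * ps i v).
  move=> c u v; rewrite mulr_sumr -big_split; apply: eq_bigr => i _.
  by rewrite linearP /= mulrDr mulrCA.
rewrite big_ord_recr /= addrC.
rewrite (@contra_morph_comb (a n) (ps n) (scalar_of part_lin)).
  by rewrite (IHn (scalar_of part_lin)).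
by move=> v; rewrite chiE big_ord_recr /= addrC.
Qed.

Lemma contra_morph_coact x0 y0 (u : Hom E x0 y0) (phi chi : {scalar N}) :
  (forall n, chi n = phi (coact n x0 y0 u)) ->
  forall m, F chi m = F phi (coact m x0 y0 u).
Proof.
move=> chiE m.
have G_lin x y (c : Ccomp k E x y) :
    scalar (fun n : N => c (hom_at u x y) * phi n).
  by move=> a n n'; rewrite linearP /= mulrDr mulrCA.
pose G x y c := scalar_of (G_lin x y c).
have G_family : lin_family k E N G.
  by move=> x y a c c' n; rewrite /= add_lfunE scale_lfunE /= mulrDl mulrA.
have chi_pi : is_pi k E N G chi.
  move=> n s uniq_s supp_n; rewrite chiE.
  by rewrite (@sum_contr_hom_at N n s x0 y0 u phi
                (fun x y c => G x y c : N -> k)).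
have [s [uniq_s supp_m]] := comodule_supp m.
rewrite (F_morph.2 G G_family chi chi_pi m s uniq_s supp_m).
apply: (@sum_contr_hom_at M m s x0 y0 u (F phi)
          (fun x y c => F (G x y c) : M -> k)) => // x y c p.
exact: contra_morph_scale.
Qed.

Lemma contra_morph_eact_repr : lf_comod N -> forall y, exists h : M -> N,
  forall (phi chi : {scalar N}), (forall n, chi n = phi (eact k E N y n)) ->
  forall m, phi (h m) = F chi m.
Proof.
move=> lfN y; have [b [c eactE]] := eact_coords lfN y.
exists (fun m => \sum_(i < size b) F (c i) m *: b`_i) => phi chi chiE m.
rewrite (@contra_morph_sum (size b) (fun i => phi b`_i) c); last first.
  move=> n; rewrite chiE eactE linear_sum.
  by apply: eq_bigr => i _; rewrite scalarZ mulrC.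
by rewrite linear_sum; apply: eq_bigr => i _; rewrite scalarZ mulrC.
Qed.

Lemma contra_morph_repr : lf_comod N ->
  exists f : M -> N, forall (phi : {scalar N}) m, phi (f m) = F phi m.
Proof.
move=> lfN; have [h hE] := functional_choice _ (contra_morph_eact_repr lfN).
have [S S_supp] := functional_choice _ (@comodule_supp M).
exists (fun m => \sum_(y <- S m) h y m) => phi m.
have [uniq_S supp_S] := S_supp m.
transitivity (\sum_(y <- S m) F phi (eact k E M y m)); last first.
  by rewrite -raddf_sum -coact_counit.
rewrite linear_sum; apply: eq_bigr => y _.
have phi_eact_lin : scalar (fun n => phi (eact k E N y n)).
  by move=> a u v; rewrite eact_linear linearP.
rewrite (hE y phi (scalar_of phi_eact_lin)) //.
exact: contra_morph_coact.
Qed.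

Section Representative.
Variables (f : M -> N) (fE : forall (phi : {scalar N}) m, phi (f m) = F phi m).
Hypothesis lfN : lf_comod N.

Lemma repr_linear : linear f.
Proof.
move=> a u v; apply/eqP; rewrite -subr_eq0; apply/eqP.
apply: scalars_separate => // phi.
by rewrite linearB linearD /= scalarZ !fE linearP subrr.
Qed.

Lemma repr_comod_morph m x y g : coact (f m) x y g = f (coact m x y g).
Proof.
apply/eqP; rewrite -subr_eq0; apply/eqP; apply: scalars_separate => // phi.
have phi_coact_lin : scalar (fun n : N => phi (coact n x y g)).
  by move=> a u v; rewrite coact_linl linearP.
rewrite linearB /= fE -[phi (coact _ x y g)]/(scalar_of phi_coact_lin (f m)) fE.
by rewrite (@contra_morph_coact x y g phi (scalar_of phi_coact_lin)) ?subrr.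
Qed.

End Representative.

Lemma contra_morph_dual : lf_comod N ->
  exists f : {linear M -> N}, comod_morph f /\
    forall (phi : {scalar N}) (m : M), F phi m = dual_map f phi m.
Proof.
move=> lfN; have [f fE] := contra_morph_repr lfN.
exists (linear_of (repr_linear _ fE lfN)); split=> [m x y g | phi m].
  by change (coact (f m) x y g = f (coact m x y g)); apply: repr_comod_morph.
by rewrite /dual_map /= fE.
Qed.

End ContraMorphisms.

End Comodules.

Theorem proposition5p1 (k : fieldType) (E : kcat k) (hE : locally_finite E)
    (M N : comodule E) (hM : lf_comod M) (hN : lf_comod N) :
  (forall f : {linear M -> N}, comod_morph f -> contra_morph (dual_map f)) /\
  (forall f g : {linear M -> N}, comod_morph f -> comod_morph g ->
     (forall (phi : {scalar N}) (m : M), dual_map f phi m = dual_map g phi m) ->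
     forall m : M, f m = g m) /\
  (forall F : {scalar N} -> {scalar M}, contra_morph F ->
     exists f : {linear M -> N}, comod_morph f /\
       forall (phi : {scalar N}) (m : M), F phi m = dual_map f phi m).
Proof.
split; first exact: dual_map_contra_morph.
split; first by move=> f g _ _; apply: dual_map_inj.
by move=> F F_morph; apply: contra_morph_dual.
Qed.
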